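(* Let $n\ge1$, $K=U(n)$ acting on $\mathcal{O}_\Lambda$ via $k\mapsto\mathrm{diag}(1,k)$, let $\mathrm{M}=\mathrm{diag}(\mu_1,\dots,\mu_n)$ with $\mu_1\ge\dots\ge\mu_n$, and let $p\in\mathcal{O}_\Lambda$ with $\Phi(p)=\mathrm{M}$, so that $p=\begin{pmatrix}c&\mathbf{z}^\dagger\\ \mathbf{z}&\mathrm{M}\end{pmatrix}$ with $\mathbf{z}\in\mathbb{C}^n$ (a column vector) and $c=\sum_{i=1}^{n+1}\lambda_i-\sum_{i=1}^n\mu_i$. Then $T_p(K\cdot p)^\omega$ (the $\omega_\Lambda$-orthogonal complement of the tangent space to the $K$-orbit in $T_p\mathcal{O}_\Lambda$) consists of exactly the matrices $$\begin{pmatrix}0&\mathbf{v}^\dagger\\ \mathbf{v}&0\end{pmatrix},\qquad \mathbf{v}=(c-\mathrm{M})\mathbf{x}+X\mathbf{z},$$ where $X\in\mathfrak{u}(n)$ and $\mathbf{x}\in\mathbb{C}^n$ range over those pairs satisfying $$0=\mathbf{x}^\dagger\mathbf{z}+\mathbf{z}^\dagger\mathbf{x},\qquad 0=\mathbf{x}\mathbf{z}^\dagger+\mathbf{z}\mathbf{x}^\dagger+[X,\mathrm{M}].$$ Moreover, $T_p(K\cdot p)\cap T_p(K\cdot p)^\omega$ consists of exactly the matrices $\begin{pmatrix}0&(Y\mathbf{z})^\dagger\\ Y\mathbf{z}&0\end{pmatrix}$ with $Y\in\mathfrak{k}_{\mathrm{M}}$.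
   Context: $\mathcal{H}_m$ denotes $m\times m$ Hermitian matrices, $\mathfrak{u}(n)$ skew-Hermitian matrices, $\dagger$ conjugate transpose. For a non-increasing real sequence $\lambda_1\ge\dots\ge\lambda_{n+1}$, $\mathcal{O}_\Lambda\subset\mathcal{H}_{n+1}$ is the set of Hermitian matrices with eigenvalues $\lambda_1,\dots,\lambda_{n+1}$, with symplectic form $(\omega_\Lambda)_p([X,p],[Y,p])=\frac{1}{\sqrt{-1}}\mathrm{Tr}(p[X,Y])$ for $X,Y\in\mathfrak{u}(n+1)$. $K=U(n)$ acts by $k\cdot p=\mathrm{diag}(1,k)\,p\,\mathrm{diag}(1,k)^\dagger$ with moment map $\Phi(p)=$ the bottom-right $n\times n$ principal submatrix of $p$ (using $\mathcal{H}_n\cong\mathfrak{u}(n)^*$, $X\mapsto(A\mapsto\frac{1}{\sqrt{-1}}\mathrm{Tr}(XA))$). $\mathfrak{k}=\mathfrak{u}(n)$ and $\mathfrak{k}_{\mathrm{M}}=\{Y\in\mathfrak{u}(n):[Y,\mathrm{M}]=0\}$. *)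

From HB Require Import structures.
From mathcomp Require Import all_boot all_order all_algebra.
Set Implicit Arguments. Unset Strict Implicit. Unset Printing Implicit Defensive.
Import Order.TTheory GRing.Theory Num.Theory.
Local Open Scope ring_scope.

(* Complex numbers: an arbitrary numClosedFieldType C (e.g. complex R for R a
   realType); conjugation is the library's z^*. *)

Definition dag (C : numClosedFieldType) m n (A : 'M[C]_(m, n)) : 'M[C]_(n, m) :=
  (map_mx (fun z => z^*) A)^T.

Definition comm (C : numClosedFieldType) n (A B : 'M[C]_n) : 'M[C]_n :=
  A *m B - B *m A.

Definition hermitian (C : numClosedFieldType) n (A : 'M[C]_n) : Prop :=
  dag A = A.

Definition skew_hermitian (C : numClosedFieldType) n (A : 'M[C]_n) : Prop :=
  dag A = - A.

(* O_Lambda: Hermitian matrices whose eigenvalues (with multiplicity) are the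
   lambda_i, i.e. whose characteristic polynomial is prod (X - lambda_i). *)
Definition coadj_orbit (C : numClosedFieldType) N (lam : 'I_N -> C)
  (p : 'M[C]_N) : Prop :=
  hermitian p /\ char_poly p = \prod_(i < N) ('X - (lam i)%:P).

(* KKS form: omega_p([X,p],[Y,p]) = (1/sqrt(-1)) Tr(p [X,Y]) *)
Definition omega (C : numClosedFieldType) N (p X Y : 'M[C]_N) : C :=
  \tr (p *m comm X Y) / 'i.

(* embedding of u(n) into u(1+n): Y |-> diag(0, Y), the infinitesimal
   generator of k |-> diag(1,k) *)
Definition embK (C : numClosedFieldType) n (Y : 'M[C]_n) : 'M[C]_(1 + n) :=
  block_mx 0 0 0 Y.

Definition tangent_Korbit (C : numClosedFieldType) n (p : 'M[C]_(1 + n))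
  (xi : 'M[C]_(1 + n)) : Prop :=
  exists Y : 'M[C]_n, skew_hermitian Y /\ xi = comm (embK Y) p.

(* T_p(K.p)^omega inside T_p O_Lambda = { [X,p] : X in u(1+n) } *)
Definition tangent_Korbit_omega (C : numClosedFieldType) n
  (p : 'M[C]_(1 + n)) (xi : 'M[C]_(1 + n)) : Prop :=
  exists X : 'M[C]_(1 + n), skew_hermitian X /\ xi = comm X p /\
    forall Y : 'M[C]_n, skew_hermitian Y -> omega p X (embK Y) = 0.

From Pilot Require Import Defs.
From HB Require Import structures.
From mathcomp Require Import all_boot all_order all_algebra.
Import Order.TTheory GRing.Theory Num.Theory.
Set Implicit Arguments.
Unset Strict Implicit.
Unset Printing Implicit Defensive.

Local Open Scope ring_scope.

(* Since omega_p([X,p], [diag(0,Y),p]) = -Tr([X,p]_22 Y)/i and [X,p]_22 is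
   Hermitian, testing against Y = i [X,p]_22 shows that [X,p] is
   omega-orthogonal to the K-orbit iff its lower-right block vanishes; as
   [X,p] is traceless, its upper-left entry then vanishes too, so [X,p] is
   off-diagonal.  With p = [[c, z^*], [z, M]] (c = Tr p - Tr M) and
   X = [[a, -w^*], [w, X']], the blocks of [X,p] are explicit: the vanishing
   upper-left and lower-right ones are the two equations (with x = w and
   X' - a in place of X), the lower-left one is v.  For X = diag(0,Y) they
   reduce to [Y,M] and Y z. *)

Section ConjugateTranspose.

Variable C : numClosedFieldType.

Lemma dagM m n k (A : 'M[C]_(m, n)) (B : 'M[C]_(n, k)) :
  dag (A *m B) = dag B *m dag A.
Proof. by rewrite /dag map_mxM trmx_mul. Qed.

Lemma dagD m n (A B : 'M[C]_(m, n)) : dag (A + B) = dag A + dag B.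
Proof. by rewrite /dag map_mxD linearD. Qed.

Lemma dagN m n (A : 'M[C]_(m, n)) : dag (- A) = - dag A.
Proof. by rewrite /dag map_mxN linearN. Qed.

Lemma dagB m n (A B : 'M[C]_(m, n)) : dag (A - B) = dag A - dag B.
Proof. by rewrite dagD dagN. Qed.

Lemma dagK m n (A : 'M[C]_(m, n)) : dag (dag A) = A.
Proof. by apply/matrixP=> i j; rewrite !mxE conjCK. Qed.

Lemma dag0 m n : dag (0 : 'M[C]_(m, n)) = 0.
Proof. by apply/matrixP=> i j; rewrite !mxE conjC0. Qed.

Lemma dagZ m n (a : C) (A : 'M[C]_(m, n)) : dag (a *: A) = a^* *: dag A.
Proof. by apply/matrixP=> i j; rewrite !mxE rmorphM. Qed.

Lemma dag_scalar_mx n (a : C) : dag (a%:M : 'M_n) = a^*%:M.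
Proof.
by apply/matrixP=> i j; rewrite !mxE eq_sym; case: eqP; rewrite ?conjC0.
Qed.

Lemma dag_block_mx m1 m2 n1 n2 (Aul : 'M[C]_(m1, n1)) (Aur : 'M_(m1, n2))
    (Adl : 'M_(m2, n1)) (Adr : 'M_(m2, n2)) :
  dag (block_mx Aul Aur Adl Adr) = block_mx (dag Aul) (dag Adl) (dag Aur) (dag Adr).
Proof. by rewrite /dag map_block_mx tr_block_mx. Qed.

Lemma mxtrace_mul_dag m n (A : 'M[C]_(m, n)) :
  \tr (A *m dag A) = \sum_i \sum_j `|A i j| ^+ 2.
Proof.
by apply: eq_bigr => i _; rewrite mxE; apply: eq_bigr => j _; rewrite !mxE normCK.
Qed.

Lemma mxtrace_mul_dag_eq0 m n (A : 'M[C]_(m, n)) : \tr (A *m dag A) = 0 -> A = 0.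
Proof.
have sq_ge0 i j : 0 <= `|A i j| ^+ 2 by rewrite exprn_ge0.
rewrite mxtrace_mul_dag => /psumr_eq0P sum0; apply/matrixP=> i j; rewrite mxE.
have /psumr_eq0P row0 := sum0 (fun k _ => sumr_ge0 _ (fun l _ => sq_ge0 k l)) i isT.
have /eqP := row0 (fun l _ => sq_ge0 i l) j isT.
by rewrite expf_eq0 normr_eq0 => /eqP.
Qed.

End ConjugateTranspose.

Section HermitianBlocks.

Variables (C : numClosedFieldType) (n : nat).

Lemma mxtrace_comm m (A B : 'M[C]_m) : \tr (comm A B) = 0.
Proof. by rewrite /comm raddfB /= mxtrace_mulC subrr. Qed.

Lemma hermitian_comm m (X p : 'M[C]_m) :
  skew_hermitian X -> Defs.hermitian p -> Defs.hermitian (comm X p).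
Proof.
rewrite /skew_hermitian /Defs.hermitian /comm => hX hp.
by rewrite dagB !dagM hX hp mulmxN mulNmx opprK addrC.
Qed.

Lemma hermitian_block_mx (A : 'M[C]_(1 + n)) : Defs.hermitian A ->
  A = block_mx (ulsubmx A) (dag (dlsubmx A)) (dlsubmx A) (drsubmx A).
Proof.
rewrite /Defs.hermitian -{1 2}[A]submxK dag_block_mx => /eq_block_mx[_ -> _ _].
by rewrite submxK.
Qed.

Lemma hermitian_drsubmx (A : 'M[C]_(1 + n)) : Defs.hermitian A -> Defs.hermitian (drsubmx A).
Proof. by rewrite /Defs.hermitian -{1 2}[A]submxK dag_block_mx => /eq_block_mx[]. Qed.

Lemma ulsubmx_trace (A : 'M[C]_(1 + n)) :
  ulsubmx A = (\tr A - \tr (drsubmx A))%:M.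
Proof. by rewrite -{2}[A]submxK mxtrace_block trace_mx11 addrK -mx11_scalar. Qed.

Lemma hermitian_offdiag (A : 'M[C]_(1 + n)) :
  Defs.hermitian A -> \tr A = 0 -> drsubmx A = 0 ->
  A = block_mx 0 (dag (dlsubmx A)) (dlsubmx A) 0.
Proof.
move=> hA trA0 drA0; rewrite {1}(hermitian_block_mx hA) ulsubmx_trace.
by rewrite trA0 drA0 mxtrace0 subr0 raddf0.
Qed.

Lemma comm_offdiag (X p : 'M[C]_(1 + n)) :
  skew_hermitian X -> Defs.hermitian p -> drsubmx (comm X p) = 0 ->
  comm X p = block_mx 0 (dag (dlsubmx (comm X p))) (dlsubmx (comm X p)) 0.
Proof.
by move=> hX hp; apply: hermitian_offdiag; [exact: hermitian_comm | exact: mxtrace_comm].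
Qed.

Lemma hermitian_trace_skew_eq0 m (W : 'M[C]_m) : Defs.hermitian W ->
  (forall Y, skew_hermitian Y -> \tr (W *m Y) = 0) -> W = 0.
Proof.
move=> hW trWY0; apply: mxtrace_mul_dag_eq0; rewrite hW.
have /trWY0 : skew_hermitian ('i *: W).
  by rewrite /skew_hermitian dagZ hW conjCi scaleNr.
rewrite -scalemxAr mxtraceZ => /eqP.
by rewrite mulf_eq0 (negPf (neq0Ci C)) => /eqP.
Qed.

End HermitianBlocks.

Section SkewHermitianBlocks.

Variables (C : numClosedFieldType) (n : nat).

Lemma skew_hermitianB m (X Y : 'M[C]_m) :
  skew_hermitian X -> skew_hermitian Y -> skew_hermitian (X - Y).
Proof. by move=> hX hY; rewrite /skew_hermitian dagB hX hY opprD. Qed.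

Lemma skew_hermitian_scalar_mx m (a : C) : a^* = - a -> skew_hermitian (a%:M : 'M_m).
Proof. by rewrite /skew_hermitian dag_scalar_mx => ->; rewrite raddfN. Qed.

Lemma skew_hermitian_blockP (X : 'M[C]_(1 + n)) : skew_hermitian X ->
  exists a w X', [/\ X = block_mx (a%:M : 'M_1) (- dag w) w X', a^* = - a
                   & skew_hermitian X'].
Proof.
move=> hX; have := hX.
rewrite /skew_hermitian -{1 2}[X]submxK dag_block_mx opp_block_mx.
move=> /eq_block_mx[ul_skew ur_dl _ dr_skew].
exists (ulsubmx X 0 0), (dlsubmx X), (drsubmx X); split => //.
- by rewrite -mx11_scalar ur_dl opprK submxK.
- by have := congr1 (fun A : 'M[C]_1 => A 0 0) ul_skew; rewrite !mxE.
Qed.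

Lemma skew_hermitian_block0 (w : 'M[C]_(n, 1)) (X : 'M[C]_n) :
  skew_hermitian X -> skew_hermitian (block_mx 0 (- dag w) w X).
Proof.
rewrite /skew_hermitian dag_block_mx dagN dagK dag0 => ->.
by rewrite opp_block_mx !oppr0 opprK.
Qed.

Lemma skew_hermitian_embK (Y : 'M[C]_n) : skew_hermitian Y -> skew_hermitian (embK Y).
Proof. by move=> /(skew_hermitian_block0 0); rewrite dag0 oppr0. Qed.

End SkewHermitianBlocks.

Section BlockCommutator.

Variables (C : numClosedFieldType) (n : nat) (a c : C) (w z : 'M[C]_(n, 1)).
Variables (X M : 'M[C]_n).

Lemma ulsubmx_comm_block :
  ulsubmx (comm (block_mx (a%:M : 'M_1) (- dag w) w X)
                (block_mx (c%:M : 'M_1) (dag z) z M))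
  = - (dag w *m z + dag z *m w).
Proof.
rewrite /comm !mulmx_block opp_block_mx add_block_mx block_mxKul.
by rewrite scalar_mxC opprD addrACA subrr add0r mulNmx opprD.
Qed.

Lemma dlsubmx_comm_block :
  dlsubmx (comm (block_mx (a%:M : 'M_1) (- dag w) w X)
                (block_mx (c%:M : 'M_1) (dag z) z M))
  = (c%:M - M) *m w + (X - a%:M) *m z.
Proof.
rewrite /comm !mulmx_block opp_block_mx add_block_mx block_mxKdl.
rewrite !mul_mx_scalar !mulmxBl !mul_scalar_mx.
by rewrite opprD [- (a *: z) + _]addrC addrACA.
Qed.

Lemma drsubmx_comm_block :
  drsubmx (comm (block_mx (a%:M : 'M_1) (- dag w) w X)
                (block_mx (c%:M : 'M_1) (dag z) z M))
  = w *m dag z + z *m dag w + comm (X - a%:M) M.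
Proof.
rewrite /comm !mulmx_block opp_block_mx add_block_mx block_mxKdr.
rewrite mulmxBl mulmxBr mul_mx_scalar mul_scalar_mx mulmxN opprD opprK opprB.
by rewrite [X in _ = _ + X]addrA subrK -!addrA [X *m M + _]addrCA.
Qed.

End BlockCommutator.

Section KOrbit.

Variables (C : numClosedFieldType) (n : nat).

Lemma omega_embK (p X : 'M[C]_(1 + n)) (Y : 'M[C]_n) :
  omega p X (embK Y) = - \tr (drsubmx (comm X p) *m Y) / 'i.
Proof.
rewrite /omega; have -> : \tr (p *m comm X (embK Y)) = - \tr (comm X p *m embK Y).
  rewrite /comm mulmxBr mulmxBl !raddfB /= !mulmxA.
  by rewrite opprK addrC [\tr (p *m embK Y *m X)]mxtrace_mulC !mulmxA.
rewrite -[comm X p]submxK /embK mulmx_block mxtrace_block !mulmx0 !add0r.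
by rewrite block_mxKdr mxtrace0 add0r.
Qed.

Lemma tangent_Korbit_omegaP (p : 'M[C]_(1 + n)) : Defs.hermitian p ->
  forall xi, tangent_Korbit_omega p xi <->
  exists2 X, skew_hermitian X & xi = comm X p /\ drsubmx xi = 0.
Proof.
move=> hp xi; split=> [[X [hX [xiE omega0]]] | [X hX [xiE dr0]]].
  exists X => //; split=> //; rewrite xiE.
  apply: hermitian_trace_skew_eq0; first exact/hermitian_drsubmx/hermitian_comm.
  move=> Y /omega0; rewrite omega_embK => /eqP.
  by rewrite mulf_eq0 invr_eq0 (negPf (neq0Ci C)) orbF oppr_eq0 => /eqP.
exists X; split=> //; split=> // Y _.
by rewrite omega_embK -xiE dr0 mul0mx mxtrace0 oppr0 mul0r.
Qed.

Lemma dlsubmx_comm_embK (Y M : 'M[C]_n) (c : C) (z : 'M[C]_(n, 1)) :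
  dlsubmx (comm (embK Y) (block_mx (c%:M : 'M_1) (dag z) z M)) = Y *m z.
Proof.
rewrite /comm /embK !mulmx_block opp_block_mx add_block_mx block_mxKdl.
by rewrite !mulmx0 !mul0mx !add0r oppr0 addr0.
Qed.

Lemma drsubmx_comm_embK (Y M : 'M[C]_n) (c : C) (z : 'M[C]_(n, 1)) :
  drsubmx (comm (embK Y) (block_mx (c%:M : 'M_1) (dag z) z M)) = comm Y M.
Proof.
rewrite /comm /embK !mulmx_block opp_block_mx add_block_mx block_mxKdr.
by rewrite !mulmx0 !mul0mx !add0r.
Qed.

End KOrbit.

Section BlockOrbit.

Variables (C : numClosedFieldType) (n : nat) (c : C) (z : 'M[C]_(n, 1)).
Variables (M : 'M[C]_n) (p : 'M[C]_(1 + n)).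
Hypotheses (hp : Defs.hermitian p) (pE : p = block_mx c%:M (dag z) z M).

Lemma tangent_Korbit_omega_block xi :
  tangent_Korbit_omega p xi <->
  exists (X : 'M[C]_n) (x : 'M[C]_(n, 1)),
    [/\ skew_hermitian X,
        dag x *m z + dag z *m x = 0,
        x *m dag z + z *m dag x + comm X M = 0 &
        xi = block_mx 0 (dag ((c%:M - M) *m x + X *m z)) ((c%:M - M) *m x + X *m z) 0].
Proof.
split=> [/(tangent_Korbit_omegaP hp) [X hX [xiE dr0]] | [X [x [hX _ dr0 ->]]]].
- have [a [w [X' [XE ha hX']]]] := skew_hermitian_blockP hX.
  have xi_offdiag := comm_offdiag hX hp; rewrite -xiE in xi_offdiag.
  have ul0 := congr1 ulsubmx (xi_offdiag dr0).
  rewrite block_mxKul xiE XE pE ulsubmx_comm_block in ul0.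
  move/eqP: ul0; rewrite oppr_eq0 => /eqP ul0.
  exists (X' - a%:M), w; split=> //.
  + exact/skew_hermitianB/skew_hermitian_scalar_mx.
  + by move: dr0; rewrite xiE XE pE drsubmx_comm_block.
  + by rewrite xi_offdiag // xiE XE pE dlsubmx_comm_block.
- apply/(tangent_Korbit_omegaP hp).
  set A : 'M_(1 + n) := block_mx 0%:M (- dag x) x X.
  have hA : skew_hermitian A by rewrite /A raddf0; exact: skew_hermitian_block0.
  have drA0 : drsubmx (comm A p) = 0 by rewrite pE drsubmx_comm_block raddf0 subr0.
  exists A => //; rewrite comm_offdiag //.
  by rewrite block_mxKdr pE dlsubmx_comm_block raddf0 subr0.
Qed.

Lemma tangent_Korbit_isotropic_block xi :
  tangent_Korbit p xi /\ tangent_Korbit_omega p xi <->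
  exists Y : 'M[C]_n,
    [/\ skew_hermitian Y, comm Y M = 0 & xi = block_mx 0 (dag (Y *m z)) (Y *m z) 0].
Proof.
split=> [[[Y [hY xiE]] /(tangent_Korbit_omegaP hp) [_ _ [_ dr0]]] | [Y [hY YM0 ->]]].
- rewrite xiE in dr0; have hYK := skew_hermitian_embK hY.
  exists Y; split=> //; first by rewrite -dr0 pE drsubmx_comm_embK.
  by rewrite xiE comm_offdiag // pE dlsubmx_comm_embK.
- have hYK := skew_hermitian_embK hY.
  have dr0 : drsubmx (comm (embK Y) p) = 0 by rewrite pE drsubmx_comm_embK.
  have xiE : block_mx 0 (dag (Y *m z)) (Y *m z) 0 = comm (embK Y) p.
    by rewrite comm_offdiag // pE dlsubmx_comm_embK.
  by rewrite xiE; split; [exists Y | apply/(tangent_Korbit_omegaP hp); exists (embK Y)].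
Qed.

End BlockOrbit.

Lemma mxtrace_coadj_orbit (C : numClosedFieldType) N (lam : 'I_N -> C) (p : 'M[C]_N) :
  (0 < N)%N -> coadj_orbit lam p -> \tr p = \sum_(i < N) lam i.
Proof.
move=> N_gt0 [_ char_p]; apply: oppr_inj; rewrite -char_poly_trace // char_p.
rewrite -(big_map lam xpredT (fun x => 'X - x%:P)) -(big_map lam xpredT id).
set s := map lam _; have size_s : size s = N.
  by rewrite size_map -[RHS]card_ord cardT enumT [index_enum _]unlock.
by rewrite -{1}size_s coefPn_prod_XsubC // size_s -lt0n.
Qed.

Theorem lemma4p3 (C : numClosedFieldType) (n : nat) (lam : 'I_(1 + n) -> C)
  (mu : 'I_n -> C) (p : 'M[C]_(1 + n)) :
  (1 <= n)%N ->
  (forall i, lam i \is Num.real) ->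
  (forall i j : 'I_(1 + n), (i <= j)%N -> lam j <= lam i) ->
  (forall i, mu i \is Num.real) ->
  (forall i j : 'I_n, (i <= j)%N -> mu j <= mu i) ->
  coadj_orbit lam p ->
  drsubmx p = diag_mx (\row_i mu i) ->
  let M := diag_mx (\row_i mu i) in
  let z : 'M[C]_(n, 1) := dlsubmx p in
  let c : C := \sum_(i < 1 + n) lam i - \sum_(i < n) mu i in
  (forall xi : 'M[C]_(1 + n),
     tangent_Korbit_omega p xi <->
     exists (X : 'M[C]_n) (x : 'M[C]_(n, 1)),
       [/\ skew_hermitian X,
           dag x *m z + dag z *m x = 0,
           x *m dag z + z *m dag x + comm X M = 0 &
           xi = block_mx 0 (dag ((c%:M - M) *m x + X *m z))
                         ((c%:M - M) *m x + X *m z) 0]) /\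
  (forall xi : 'M[C]_(1 + n),
     (tangent_Korbit p xi /\ tangent_Korbit_omega p xi) <->
     exists Y : 'M[C]_n,
       [/\ skew_hermitian Y, comm Y M = 0 &
           xi = block_mx 0 (dag (Y *m z)) (Y *m z) 0]).
Proof.
move=> _ _ _ _ _ p_orbit p_dr M z c; have hp : Defs.hermitian p := p_orbit.1.
have pE : p = block_mx c%:M (dag z) z M.
  rewrite {1}(hermitian_block_mx hp) ulsubmx_trace.
  rewrite (mxtrace_coadj_orbit (ltn0Sn n) p_orbit) p_dr mxtrace_diag.
  by rewrite (eq_bigr _ (fun i _ => mxE _ _ _ _)).
by split; [exact: tangent_Korbit_omega_block hp pE | exact: tangent_Korbit_isotropic_block hp pE].
Qed.
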